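(* Let $p$ be prime, $\mathcal{A}=\mathbb{Z}/p$ and $D\ge1$. Then every nontrivial linear cellular automaton on $\mathcal{A}^{\mathbb{Z}^D}$ is diffusive in density.
   Context: For $\vec m\in\mathbb{Z}^D$, $(\sigma^{\vec m}\mathbf{a})_{\vec n}=a_{\vec m+\vec n}$. Every LCA on $\mathcal{A}^{\mathbb{Z}^D}$ has the form $\mathfrak{F}=\sum_{\vec u\in U}f_{\vec u}\sigma^{\vec u}$ with $U$ finite, $f_{\vec u}\in\mathbb{Z}/p$; it is nontrivial if at least two of the coefficients $f_{\vec u}$ are nonzero. Characters of $\mathcal{A}^{\mathbb{Z}^D}$ are $\chi=\bigotimes_{\vec n}\chi_{\vec n}$ with $\chi_{\vec n}$ characters of $\mathcal{A}$, all but finitely many trivial; rank$(\chi)$ is the number of nontrivial $\chi_{\vec n}$. $\mathfrak{F}$ is diffusive in density if for every nontrivial character $\chi$ there is $J_\chi\subset\mathbb{N}$ of Cesàro density 1 (i.e. $|J_\chi\cap[1,N]|/N\to1$) such that rank$(\chi\circ\mathfrak{F}^j)\to\infty$ as $j\to\infty$, $j\in J_\chi$. *)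

From mathcomp Require Import all_boot all_order all_algebra all_field.
Set Implicit Arguments. Unset Strict Implicit. Unset Printing Implicit Defensive.
Import Order.TTheory GRing.Theory Num.Theory.
Local Open Scope ring_scope.

Definition lattice (D : nat) := 'rV[int]_D.

Definition config (p D : nat) := lattice D -> 'F_p.

Definition shift (p D : nat) (m : lattice D) (a : config p D) : config p D :=
  fun n => a (m + n).

Definition lca (p D : nat) (U : seq (lattice D)) (f : lattice D -> 'F_p)
  (a : config p D) : config p D :=
  fun n => \sum_(u <- U) f u * shift u a n.

Definition nontrivial_lca (p D : nat) (U : seq (lattice D)) (f : lattice D -> 'F_p) : Prop :=
  exists u v, [/\ u \in U, v \in U, u != v, f u != 0 & f v != 0].

Definition is_charA (p : nat) (x : 'F_p -> algC) : Prop :=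
  x 0 = 1 /\ forall a b, x (a + b) = x a * x b.

Definition trivial_charA (p : nat) (x : 'F_p -> algC) : bool :=
  [forall a, x a == 1].

Definition char_family (p D : nat) (chi : lattice D -> 'F_p -> algC)
  (S : seq (lattice D)) : Prop :=
  [/\ uniq S, (forall n, is_charA (chi n))
    & (forall n, n \notin S -> trivial_charA (chi n))].

Definition char_eval (p D : nat) (chi : lattice D -> 'F_p -> algC)
  (S : seq (lattice D)) (a : config p D) : algC :=
  \prod_(n <- S) chi n (a n).

Definition fam_rank (p D : nat) (chi : lattice D -> 'F_p -> algC)
  (S : seq (lattice D)) : nat :=
  count (fun n => ~~ trivial_charA (chi n)) S.

Definition has_rank (p D : nat) (psi : config p D -> algC) (r : nat) : Prop :=
  exists chi S, [/\ char_family chi S,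
                    (forall a, psi a = char_eval chi S a)
                  & fam_rank chi S = r].

Definition density_one (J : nat -> bool) : Prop :=
  forall eps : rat, 0 < eps -> exists N0 : nat, forall N : nat, (N0 <= N)%N ->
    `| (count J (iota 1 N))%:R / N%:R - 1 | < eps.

Definition diffusive_in_density (p D : nat) (F : config p D -> config p D) : Prop :=
  forall (chi : lattice D -> 'F_p -> algC) (S : seq (lattice D)),
    char_family chi S -> (0 < fam_rank chi S)%N ->
    exists J : nat -> bool, density_one J /\
      forall M : nat, exists N0 : nat, forall j : nat, J j -> (N0 <= j)%N ->
        let psi := fun a => char_eval chi S (iter j F a) in
        (exists r, has_rank psi r) /\ (forall r, has_rank psi r -> (M <= r)%N).

From mathcomp Require Import all_boot all_order all_algebra all_field.
From mathcomp Require Import zify ring lra.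
From Stdlib Require Import FunctionalExtensionality.
Set Implicit Arguments. Unset Strict Implicit. Unset Printing Implicit Defensive.
Import Order.TTheory GRing.Theory Num.Theory.

(* Characters of A^(Z^D) are encoded by finitely supported F_p-valued configurations c,
   on which composition with F acts by the transposed automaton
   c_(j+1)(m) = sum_u f_u c_j(m - u); the rank of chi \o F^j is at least the size of the
   support of c_j.  Projecting Z^D to Z along a linear form that is injective on the
   relevant finite sets maps c_j to C * P^j, so that support is at least the number of
   nonzero coefficients of C * P^j.  By the Frobenius identity
   P^(a + p^k b) = P^a (P^b \Po X^(p^k)), every nonzero base-p^(size P + 1) digit of j that
   is divisible by p^(size P) and sits beyond position size C doubles that number.  For each
   s, the j below a power of the base with fewer than s such digits form a vanishing
   proportion; this yields a density-one set of j along which the number of such digits,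
   hence the rank, tends to infinity. *)

(** * Good digits *)

Definition digit (Q j i : nat) : nat := j %/ Q ^ i %% Q.

Definition good_digits (Q : nat) (good : pred nat) (j t : nat) : nat :=
  count (fun i => good (digit Q j i)) (iota 0 t).

Definition deficient (Q : nat) (good : pred nat) (t s : nat) : nat :=
  count (fun j => good_digits Q good j t < s) (iota 0 (Q ^ t)).

Lemma count_iota_mul (P : pred nat) a n :
  count P (iota 0 (a * n)) = \sum_(x < n) count (fun v => P (v + a * x)) (iota 0 a).
Proof.
elim: n => [|n IH]; first by rewrite muln0 big_ord0.
rewrite big_ord_recr /= -IH mulnS addnC iotaD count_cat add0n.
have -> : iota (a * n) a = map (addn (a * n)) (iota 0 a) by rewrite -iotaDl addn0.
by rewrite count_map; congr (_ + _); apply: eq_count => v /=; rewrite addnC.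
Qed.

Lemma uniq_count_leq (T : eqType) (P P' : pred T) (s1 s2 : seq T) : uniq s1 ->
  (forall x, x \in s1 -> P x -> (x \in s2) && P' x) -> count P s1 <= count P' s2.
Proof.
move=> u h; rewrite -!size_filter; apply: uniq_leq_size; first exact: filter_uniq.
by move=> x; rewrite !mem_filter => /andP[Px xs]; have /andP[-> ->] := h x xs Px.
Qed.

Section Digits.

Variables (Q : nat) (good : pred nat).
Hypothesis Q_gt0 : 0 < Q.

Lemma digit_addl v x t i : i < t -> digit Q (v + Q ^ t * x) i = digit Q v i.
Proof.
move=> it; rewrite /digit.
have -> : Q ^ t * x = (Q * Q ^ (t - i.+1) * x) * Q ^ i.
  by rewrite [RHS]mulnC !mulnA -expnSr -expnD; congr (Q ^ _ * x); lia.
by rewrite addnC divnMDl ?expn_gt0 ?Q_gt0 // -mulnA mulnC modnMDl.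
Qed.

Lemma digit_top v x t : v < Q ^ t -> x < Q -> digit Q (v + Q ^ t * x) t = x.
Proof.
move=> vt xQ; rewrite /digit addnC mulnC divnMDl ?expn_gt0 ?Q_gt0 //.
by rewrite divn_small // addn0 modn_small.
Qed.

Lemma good_digitsS v x t : v < Q ^ t -> x < Q ->
  good_digits Q good (v + Q ^ t * x) t.+1 = good_digits Q good v t + good x.
Proof.
move=> vt xQ; rewrite /good_digits -addn1 iotaD count_cat /= add0n digit_top // addn0.
congr (_ + _); apply: eq_in_count => i; rewrite mem_iota add0n => /andP[_ it].
by rewrite digit_addl.
Qed.

Lemma good_digits_stable j t t' : 1 < Q -> ~~ good 0 -> j < Q ^ t -> t <= t' ->
  good_digits Q good j t' = good_digits Q good j t.
Proof.
move=> Q1 g0 jt tt'; rewrite /good_digits -(subnKC tt') iotaD count_cat add0n.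
rewrite [X in _ + X](_ : _ = 0) ?addn0 //; apply/eqP; rewrite -leqn0 leqNgt -has_count.
apply/hasPn => i; rewrite mem_iota => /andP[ti _] /=.
rewrite /digit divn_small ?mod0n //; apply: leq_trans jt _; rewrite leq_exp2l //.
Qed.

Lemma deficient0 t : deficient Q good t 0 = 0.
Proof. by apply/eqP; rewrite -leqn0 leqNgt -has_count; apply/hasPn. Qed.

Lemma deficient_leq_exp t s : deficient Q good t s <= Q ^ t.
Proof. by rewrite -[X in _ <= X](size_iota 0) count_size. Qed.

Lemma deficientSS t s : deficient Q good t.+1 s.+1 =
  \sum_(x < Q) (if good x then deficient Q good t s else deficient Q good t s.+1).
Proof.
rewrite /deficient expnSr count_iota_mul; apply: eq_bigr => x _.
by case E: (good x); apply: eq_in_count => v; rewrite mem_iota add0n => /andP[_ vt] /=;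
  rewrite good_digitsS // E /=; lia.
Qed.

Lemma deficientS_leq t s : deficient Q good t.+1 s <= Q * deficient Q good t s.
Proof.
rewrite /deficient expnSr count_iota_mul -[X in X * _]card_ord -sum_nat_const.
apply: leq_sum => x _; apply: uniq_count_leq; first exact: iota_uniq.
move=> v vt; rewrite vt /=; move: vt; rewrite mem_iota add0n => /andP[_ vt].
rewrite good_digitsS //; lia.
Qed.

End Digits.

Section Decay.

Variable R : archiRealFieldType.
Local Open Scope ring_scope.

Definition vanishing (x : nat -> R) : Prop :=
  forall eps, 0 < eps -> exists T, forall t, (T <= t)%N -> x t <= eps.

Lemma expr_one_sub_bernoulli (q : R) n : 0 <= q <= 1 -> (1 - q) ^+ n * (1 + n%:R * q) <= 1.
Proof.
move=> /andP[q0 q1]; elim: n => [|n IH]; first by rewrite expr0 mul0r addr0 mulr1.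
have n0 : 0 <= n%:R :> R by rewrite ler0n.
have step : (1 - q) * (1 + n.+1%:R * q) <= 1 + n%:R * q.
  by rewrite -natr1; have := mulr_ge0 (mulr_ge0 n0 q0) q0; nra.
rewrite exprSr -mulrA; apply: le_trans IH; apply: ler_wpM2l => //.
by apply: exprn_ge0; lra.
Qed.

Lemma expr_one_sub_small (q eps : R) : 0 < q <= 1 -> 0 < eps ->
  exists n : nat, (1 - q) ^+ n <= eps.
Proof.
move=> /andP[q0 q1] e0; have eq0 : 0 < eps * q by apply: mulr_gt0.
have b0 : 0 <= (eps * q)^-1 by rewrite invr_ge0 ltW.
have := archi_boundP b0; set n := Num.Def.archi_bound _ => hn; exists n.
have big : 1 < eps * (n%:R * q).
  by rewrite mulrCA mulrC -[X in X < _](mulfV (lt0r_neq0 eq0)) ltr_pM2l.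
have := @expr_one_sub_bernoulli q n; rewrite ltW //= => /(_ q1).
have X0 : 0 <= (1 - q) ^+ n by apply: exprn_ge0; lra.
have nq0 : 0 <= n%:R * q by rewrite mulr_ge0 ?ler0n ?ltW.
move: X0 big nq0; set X := (1 - q) ^+ n; set Y := n%:R * q => X0 big nq0 bern.
have : X <= X * (eps * Y) by rewrite ler_peMr // ltW.
nra.
Qed.

Lemma vanishing_recursion (x y : nat -> R) (q : R) : 0 < q <= 1 ->
  (forall t, 0 <= x t <= 1) -> (forall t, x t.+1 <= (1 - q) * x t + q * y t) ->
  vanishing y -> vanishing x.
Proof.
move=> qq hx hr hy eps e0; have /andP[q0 q1] := qq.
have e2 : 0 < eps / 2 by apply: divr_gt0.
have [T1 hT1] := hy _ e2.
have contract n : x (T1 + n)%N - eps / 2 <= (1 - q) ^+ n.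
  elim: n => [|n IH]; first by rewrite addn0 expr0; have := hx T1; lra.
  rewrite addnS exprS; have h1 := hr (T1 + n)%N; have h2 := hT1 (T1 + n)%N (leq_addr _ _).
  have a1 : q * y (T1 + n)%N <= q * (eps / 2) by rewrite ler_wpM2l // ltW.
  have a2 : (1 - q) * (x (T1 + n)%N - eps / 2) <= (1 - q) * (1 - q) ^+ n.
    by rewrite ler_wpM2l //; lra.
  move: h1 a1 a2; set X := x _; set Y := y _; set X' := x _; set Z := (1 - q) ^+ n => h1 a1 a2.
  have : (1 - q) * (X - eps / 2) = (1 - q) * X - eps / 2 + q * (eps / 2) by ring.
  lra.
have [n hn] := expr_one_sub_small qq e2.
exists (T1 + n)%N => t ht; have := contract (t - T1)%N; rewrite subnKC; last first.
  by apply: leq_trans ht; exact: leq_addr.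
have : (1 - q) ^+ (t - T1) <= (1 - q) ^+ n by apply: ler_wiXn2l; [lra|lra|lia].
lra.
Qed.

End Decay.

Lemma sum_if_card (T : finType) (P : pred T) (a b : nat) :
  \sum_(x : T) (if P x then a else b) = #|P| * a + (#|T| - #|P|) * b.
Proof.
rewrite (bigID P) /= -(cardC P) addKn (eq_bigr (fun=> a)) => [|x ->] //.
by rewrite [X in _ + X](eq_bigr (fun=> b)) => [|x /negbTE ->] //; rewrite !sum_nat_const.
Qed.

Section Density.

Variables (Q : nat) (good : pred nat).
Hypothesis Q_gt1 : 1 < Q.
Hypothesis good0 : ~~ good 0.
Hypothesis some_good : exists2 x, x < Q & good x.

Let Q_gt0 : 0 < Q. Proof. exact: ltnW. Qed.

Let good_frac : rat := (#|[pred x : 'I_Q | good x]|%:R / Q%:R)%R.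

Let good_frac_range : (0 < good_frac <= 1)%R.
Proof.
have [x xQ gx] := some_good.
rewrite divr_gt0 ?ltr0n //=; last by apply/card_gt0P; exists (Ordinal xQ).
by rewrite ler_pdivrMr ?ltr0n // mul1r ler_nat -[X in _ <= X]card_ord max_card.
Qed.

Definition deficient_ratio (t s : nat) : rat :=
  ((deficient Q good t s)%:R / (Q ^ t)%:R)%R.

Lemma deficient_ratio_range t s : (0 <= deficient_ratio t s <= 1)%R.
Proof.
rewrite divr_ge0 ?ler0n //= ler_pdivrMr ?ltr0n ?expn_gt0 ?Q_gt0 //.
by rewrite mul1r ler_nat deficient_leq_exp.
Qed.

Lemma deficient_ratioSS t s : deficient_ratio t.+1 s.+1 =
  ((1 - good_frac) * deficient_ratio t s.+1 + good_frac * deficient_ratio t s)%R.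
Proof.
have hG : #|[pred x : 'I_Q | good x]| <= Q by rewrite -[X in _ <= X]card_ord max_card.
rewrite /deficient_ratio deficientSS // (sum_if_card [pred x : 'I_Q | good x]) card_ord.
rewrite natrD !natrM natrB // expnSr natrM /good_frac.
have h1 : (Q%:R != 0 :> rat)%R by rewrite pnatr_eq0 -lt0n.
have h2 : ((Q ^ t)%:R != 0 :> rat)%R by rewrite pnatr_eq0 -lt0n expn_gt0 Q_gt0.
by field; apply/andP.
Qed.

Lemma deficient_ratio_vanishing s : vanishing (deficient_ratio^~ s).
Proof.
elim: s => [|s IH] eps e0; first by exists 0 => t _; rewrite /deficient_ratio deficient0 mul0r ltW.
apply: (vanishing_recursion (y := deficient_ratio^~ s) good_frac_range) eps e0 => // t.
  exact: deficient_ratio_range.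
by rewrite deficient_ratioSS.
Qed.

Definition threshold (t : nat) : nat :=
  \max_(s < t.+1 | deficient Q good t s * s.+1 <= Q ^ t) s.

Lemma threshold_spec t : deficient Q good t (threshold t) * (threshold t).+1 <= Q ^ t.
Proof.
have nonempty : 0 < #|[pred s : 'I_t.+1 | deficient Q good t s * s.+1 <= Q ^ t]|.
  by apply/card_gt0P; exists ord0; rewrite inE /= deficient0.
have [s0 hs0 e] := eq_bigmax_cond (fun s : 'I_t.+1 => nat_of_ord s) nonempty.
suff -> : threshold t = s0 by rewrite inE in hs0.
by rewrite -e; apply: eq_bigl => s; rewrite inE.
Qed.

Lemma threshold_leq t : threshold t <= t.
Proof. by apply/bigmax_leqP => s _; rewrite -ltnS. Qed.

Lemma threshold_max t s : s <= t -> deficient Q good t s * s.+1 <= Q ^ t -> s <= threshold t.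
Proof.
by rewrite -ltnS => st hs; apply: (leq_bigmax_cond (Ordinal st)).
Qed.

Lemma threshold_mono : {homo threshold : t t' / t <= t'}.
Proof.
apply: homo_leq => [//|y x z|t]; first exact: leq_trans.
apply: threshold_max; first exact/leqW/threshold_leq.
apply: leq_trans (leq_mul (deficientS_leq good Q_gt0 _ _) (leqnn _)) _.
by rewrite -mulnA expnS leq_mul2l threshold_spec orbT.
Qed.

Lemma threshold_unbounded s : exists t, s <= threshold t.
Proof.
have e0 : (0 < s.+1%:R^-1 :> rat)%R by rewrite invr_gt0 ltr0n.
have [T hT] := deficient_ratio_vanishing s e0.
exists (maxn T s); apply: threshold_max; first exact: leq_maxr.
have := hT (maxn T s) (leq_maxl _ _); rewrite /deficient_ratio.
rewrite ler_pdivrMr ?ltr0n ?expn_gt0 ?Q_gt0 // => h.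
rewrite -(ler_nat rat) natrM; apply: le_trans (ler_wpM2r (ler0n _ _) h) _.
by rewrite mulrC mulrA mulfV ?mul1r // pnatr_eq0.
Qed.

Definition ndigits (j : nat) : nat := (trunc_log Q j).+1.

Lemma ndigitsP j : j < Q ^ ndigits j.
Proof. exact: trunc_log_ltn. Qed.

Lemma ndigits_gt t j : Q ^ t <= j -> t < ndigits j.
Proof. by move=> h; rewrite -(ltn_exp2l _ _ Q_gt1); apply: leq_ltn_trans h (ndigitsP j). Qed.

Definition many_good (j : nat) : bool :=
  threshold (ndigits j) <= good_digits Q good j (ndigits j).

Lemma many_good_unbounded M : exists N0, forall j, many_good j -> N0 <= j ->
  M <= good_digits Q good j (ndigits j).
Proof.
have [t ht] := threshold_unbounded M; exists (Q ^ t) => j gj hj.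
by apply: leq_trans ht (leq_trans _ gj); apply/threshold_mono/ltnW/ndigits_gt.
Qed.

(* A j <= N that is not [many_good] has fewer than [threshold (ndigits N)] good digits
   among its first [ndigits N], so it is counted by [deficient]. *)
Lemma few_good_count N : 0 < N ->
  count (predC many_good) (iota 1 N) * (threshold (ndigits N)).+1 <= Q * N.
Proof.
move=> N0; set t := ndigits N.
have few : count (predC many_good) (iota 1 N) <= deficient Q good t (threshold t).
  apply: uniq_count_leq; first exact: iota_uniq.
  move=> j; rewrite mem_iota => /andP[j1 jN] /= bad.
  have jN' : j <= N by rewrite -ltnS -(addn1 N) addnC.
  rewrite mem_iota add0n (leq_ltn_trans jN' (ndigitsP N)) /=.
  have tj : ndigits j <= t by rewrite ltnS leq_trunc_log.
  rewrite (good_digits_stable Q_gt1 good0 (ndigitsP j) tj).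
  by apply: leq_trans (threshold_mono tj); rewrite ltnNge.
apply: leq_trans (leq_mul few (leqnn _)) _; apply: leq_trans (threshold_spec _) _.
by rewrite expnS leq_mul2l (trunc_logP Q_gt1 N0) orbT.
Qed.

Lemma density_one_many_good : density_one many_good.
Proof.
move=> eps e0; have b0 : (0 <= Q%:R / eps :> rat)%R by rewrite divr_ge0 ?ler0n // ltW.
have := archi_boundP b0; set A := Num.Def.archi_bound _ => hA.
have [t0 ht0] := threshold_unbounded A.
exists (Q ^ t0) => N hN; have N0 : 0 < N by apply: leq_trans hN; rewrite expn_gt0 Q_gt0.
have hS : A <= threshold (ndigits N) by apply/(leq_trans ht0)/threshold_mono/ltnW/ndigits_gt.
have := few_good_count N0; set c := count _ _; set S := threshold _ => hc.
have cN : c <= N by rewrite -[X in _ <= X](size_iota 1); apply: count_size.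
have -> : count many_good (iota 1 N) = N - c.
  by rewrite -[X in _ = X - _](size_iota 1) -(count_predC many_good) addnK.
have Nr : (N%:R != 0 :> rat)%R by rewrite pnatr_eq0 -lt0n.
rewrite natrB // (_ : ((N%:R - c%:R) / N%:R - 1 = - (c%:R / N%:R) :> rat)%R); last by field.
rewrite normrN ger0_norm ?divr_ge0 ?ler0n // ltr_pdivrMr ?ltr0n //.
have QS : (Q%:R < eps * S.+1%:R :> rat)%R.
  rewrite ltr_pdivrMr // in hA; rewrite mulrC; apply: lt_le_trans hA _.
  by rewrite ler_pM2r // ler_nat; apply: leqW.
have cS : (c%:R * S.+1%:R <= Q%:R * N%:R :> rat)%R by rewrite -!natrM ler_nat.
have : (Q%:R * N%:R < eps * S.+1%:R * N%:R :> rat)%R by rewrite ltr_pM2r ?ltr0n.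
rewrite mulrAC => lt; have := le_lt_trans cS lt.
by rewrite ltr_pM2r ?ltr0n.
Qed.

End Density.

Local Open Scope ring_scope.

(** * Polynomials over F_p *)

Section NonzeroCoefficients.

Variable F : idomainType.
Implicit Types (R : {poly F}).

Definition coef_support R : seq nat := [seq i <- iota 0 (size R) | R`_i != 0].

Definition nzcoefs R : nat := size (coef_support R).

Lemma mem_coef_support R i : (i \in coef_support R) = (R`_i != 0).
Proof.
rewrite mem_filter mem_iota add0n /=; case: eqP => //= nz.
by rewrite ltnNge; apply/negP => /leq_sizeP /(_ i (leqnn i)).
Qed.

Lemma coef_support_uniq R : uniq (coef_support R).
Proof. by rewrite filter_uniq // iota_uniq. Qed.

Lemma coef_support_lt R i : i \in coef_support R -> (i < size R)%N.
Proof. by rewrite mem_filter mem_iota add0n => /andP[_ /andP[_ ->]]. Qed.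

Lemma nzcoefs_ge R (s : seq nat) : uniq s -> {in s, forall i, R`_i != 0} ->
  (size s <= nzcoefs R)%N.
Proof. by move=> us h; apply: uniq_leq_size => // i /h; rewrite mem_coef_support. Qed.

Lemma nzcoefs_gt0 R : R != 0 -> (0 < nzcoefs R)%N.
Proof.
move=> R0; apply: (@nzcoefs_ge R [:: (size R).-1]) => // i; rewrite inE => /eqP ->.
by rewrite -/(lead_coef R) lead_coef_eq0.
Qed.

Lemma coefM_comp_polyXn (Q R : {poly F}) K i t : (size Q <= K)%N -> (i < K)%N ->
  (Q * (R \Po 'X^K))`_(i + K * t) = Q`_i * R`_t.
Proof.
move=> sQ iK; have K0 : (0 < K)%N by apply: leq_ltn_trans iK.
have io : (i < (i + K * t).+1)%N by rewrite ltnS leq_addr.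
have same_residue j : (j < K)%N -> (j <= i + K * t)%N -> (K %| i + K * t - j)%N -> j = i.
  move=> jK jle; rewrite -eqn_mod_dvd // addnC mulnC modnMDl !modn_small //.
  by move/eqP.
rewrite coefM (bigD1 (Ordinal io)) //= addKn coef_comp_poly_Xn // dvdn_mulr // mulKn //.
rewrite big1 ?addr0 // => j ji; case: (ltnP j (size Q)) => jQ; last by rewrite nth_default ?mul0r.
rewrite coef_comp_poly_Xn //; case: ifP => [dv|]; last by rewrite mulr0.
have := same_residue j (leq_trans jQ sQ) _ dv; rewrite -ltnS => /(_ (ltn_ord j)) ji'.
by move: ji; rewrite (_ : j = Ordinal io) ?eqxx //; apply: val_inj.
Qed.

(* Multiplying by [R \Po 'X^K] with [K >= size Q] places two disjoint shifted copies
   of [Q] at the blocks of two nonzero coefficients of [R]. *)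
Lemma nzcoefs_spread (Q R : {poly F}) K t1 t2 : (size Q <= K)%N -> t1 != t2 ->
  R`_t1 != 0 -> R`_t2 != 0 -> (2 * nzcoefs Q <= nzcoefs (Q * (R \Po 'X^K)))%N.
Proof.
move=> sQ t12 r1 r2.
have lt i : i \in coef_support Q -> (i < K)%N by move/coef_support_lt/leq_trans; apply.
have blockK i t : i \in coef_support Q -> ((i + K * t) %/ K = t)%N.
  move=> /lt iK; have K0 : (0 < K)%N by apply: leq_ltn_trans iK.
  by rewrite addnC mulnC divnMDl // divn_small // addn0.
set s := [seq i + K * t1 | i <- coef_support Q] ++ [seq i + K * t2 | i <- coef_support Q].
have -> : (2 * nzcoefs Q = size s)%N by rewrite size_cat !size_map mul2n -addnn.
apply: nzcoefs_ge.
  rewrite cat_uniq !map_inj_uniq ?coef_support_uniq //; try exact: addIn.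
  rewrite andbT; apply/hasPn => x /mapP[i hi ->]; apply/mapP => [[i' hi' e]].
  by move: t12; have := congr1 (divn^~ K) e; rewrite /= !blockK // => ->; rewrite eqxx.
move=> x; rewrite mem_cat => /orP[] /mapP[i hi ->];
  by rewrite coefM_comp_polyXn ?lt // mulf_neq0 // -mem_coef_support.
Qed.

End NonzeroCoefficients.

Lemma count_leq_split (T : Type) (a b : pred T) (s : seq T) :
  (count a s <= count (predI b a) s + count (predC b) s)%N.
Proof. by elim: s => //= x s IH; case: (a x); case: (b x) => /=; lia. Qed.

Section FrobeniusDoubling.

Variable p : nat.
Hypothesis p_pr : prime p.
Implicit Types (C P Q : {poly 'F_p}).

Lemma Fp_poly_expp Q : Q ^+ p = Q \Po 'X^p.
Proof.
have chP : p \in [pchar {poly 'F_p}] by rewrite pchar_poly pchar_Fp.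
have fixed (x : 'F_p) : x ^+ p = x by have := expf_card x; rewrite card_Fp.
rewrite comp_polyE -{1}(coefK Q) poly_def -(pFrobenius_autE chP) raddf_sum /=.
apply: eq_bigr => i _.
by rewrite pFrobenius_autE exprZn fixed -exprM mulnC exprM.
Qed.

Lemma Fp_poly_exp_ppow Q k : Q ^+ (p ^ k) = Q \Po 'X^(p ^ k).
Proof.
elim: k => [|k IH]; first by rewrite expn0 expr1 comp_polyXr.
by rewrite expnSr exprM IH Fp_poly_expp -comp_polyA comp_Xn_poly -exprM mulnC.
Qed.

(* [P ^+ (a + p ^ k * b) = P ^+ a * (P ^+ b \Po 'X^(p ^ k))], and [P ^+ b] has nonzero
   constant and leading coefficients. *)
Lemma nzcoefs_double C P a b k : C != 0 -> P`_0 != 0 -> (1 < size P)%N -> (0 < b)%N ->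
  (size C + (size P).-1 * a <= p ^ k)%N ->
  (2 * nzcoefs (C * P ^+ a) <= nzcoefs (C * P ^+ (a + p ^ k * b)))%N.
Proof.
move=> C0 P0 sP b0 hs.
have Pn0 : P != 0 by rewrite -size_poly_eq0 -lt0n ltnW.
rewrite exprD (mulnC (p ^ k)%N) exprM Fp_poly_exp_ppow mulrA.
apply: (@nzcoefs_spread _ _ _ _ 0 ((size P).-1 * b)).
- rewrite size_mul ?expf_neq0 // -(prednK (_ : 0 < size (P ^+ a))%N).
    by rewrite size_exp addnS.
  by rewrite lt0n size_poly_eq0 expf_neq0.
- by rewrite eq_sym -lt0n muln_gt0 b0 andbT -subn1 subn_gt0.
- by rewrite -horner_coef0 horner_exp horner_coef0 expf_neq0.
- have := lead_coef_exp P b; rewrite /lead_coef size_exp => ->.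
  by rewrite expf_neq0 // -/(lead_coef P) lead_coef_eq0.
Qed.

Section Growth.

Variables C P : {poly 'F_p}.
Hypotheses (C_neq0 : C != 0) (P0_neq0 : P`_0 != 0) (P_nonconst : (1 < size P)%N).

Definition growth_base : nat := p ^ (size P).+1.

Definition growth_digit (v : nat) : bool := (p ^ size P %| v)%N && (v != 0%N).

(* A good digit [p ^ size P * x] at position [n] writes [j] as
   [j %% growth_base ^ n + p ^ ((size P).+1 * n + size P) * (x + p * _)] with [0 < x]. *)
Lemma nzcoefs_double_digit j n : (size C <= n)%N ->
  growth_digit (digit growth_base j n) ->
  (2 * nzcoefs (C * P ^+ (j %% growth_base ^ n)) <= nzcoefs (C * P ^+ j))%N.
Proof.
move=> Cn /andP[/dvdnP[x ex] v0].
have p1 : (1 < p)%N by apply: prime_gt1.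
set m := size P; set Q := growth_base; set a := (j %% Q ^ n)%N; set w := (j %/ Q ^ n)%N.
have eQn : (Q ^ n = p ^ (m.+1 * n))%N by rewrite /Q /growth_base expnM.
have ej : j = (a + p ^ (m.+1 * n + m) * (x + p * (w %/ Q)))%N.
  have ew : w = (w %/ Q * Q + x * p ^ m)%N by rewrite -ex; apply: divn_eq.
  rewrite {1}(divn_eq j (Q ^ n)) -/a -/w {1}ew eQn /Q /growth_base !expnD expnS.
  ring.
rewrite [in X in (_ <= nzcoefs (_ * _ ^+ X))%N]ej; apply: nzcoefs_double => //.
  by rewrite lt0n addn_eq0 negb_and; move: v0; rewrite ex muln_eq0 negb_or => /andP[->].
have aX : (a < p ^ (m.+1 * n))%N by rewrite -eQn /a ltn_mod expn_gt0 expn_gt0 prime_gt0.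
have cX : (size C <= p ^ (m.+1 * n))%N.
  apply: (leq_trans Cn); apply: (leq_trans (ltnW (ltn_expl n p1))).
  by rewrite leq_exp2l // leq_pmull.
have mY : (m <= p ^ m)%N by apply/ltnW/ltn_expl.
rewrite expnD; apply: (@leq_trans (m * p ^ (m.+1 * n))); last by rewrite mulnC leq_mul2l mY orbT.
have am : (m.-1 * a <= m.-1 * p ^ (m.+1 * n))%N by rewrite leq_mul2l ltnW ?orbT.
by rewrite -[X in (_ <= X * _)%N](prednK (ltnW P_nonconst)) mulSn leq_add.
Qed.

Lemma nzcoefs_growth j n :
  (2 ^ (good_digits growth_base growth_digit j n - size C) <= nzcoefs (C * P ^+ j))%N.
Proof.
have P_neq0 : P != 0 by rewrite -size_poly_eq0 -lt0n ltnW.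
pose late l i := (size C <= i)%N && growth_digit (digit growth_base l i).
have doubling k l : (2 ^ count (late l) (iota 0 k) <= nzcoefs (C * P ^+ l))%N.
  elim: k l => [|k IH] l; first by rewrite nzcoefs_gt0 // mulf_neq0 // expf_neq0.
  rewrite -[k.+1]addn1 iotaD count_cat add0n /= addn0.
  case E: (late l k); last by rewrite addn0 IH.
  move/andP: E => [Ck gd].
  have same : count (late l) (iota 0 k) = count (late (l %% growth_base ^ k)%N) (iota 0 k).
    apply: eq_in_count => i; rewrite mem_iota add0n => /andP[_ ilt].
    by rewrite /late {1}(divn_eq l (growth_base ^ k)) addnC mulnC digit_addl // expn_gt0 prime_gt0.
  rewrite addn1 expnS same; apply: leq_trans (nzcoefs_double_digit Ck gd).
  by rewrite leq_mul2l IH.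
apply: leq_trans (doubling n j); rewrite leq_exp2l // leq_subLR addnC.
apply: leq_trans (count_leq_split _ (fun i => size C <= i)%N _) _; rewrite leq_add2l.
apply: (@leq_trans (count predT (iota 0 (size C)))); last by rewrite count_predT size_iota.
apply: uniq_count_leq; first exact: iota_uniq.
by move=> i _ /=; rewrite -ltnNge mem_iota add0n => ->.
Qed.

End Growth.

End FrobeniusDoubling.

(** * Characters of the configuration group *)

Lemma charA0 (p : nat) (x : 'F_p -> algC) : is_charA x -> x 0 = 1.
Proof. by case. Qed.

Lemma charAD (p : nat) (x : 'F_p -> algC) a b : is_charA x -> x (a + b) = x a * x b.
Proof. by case=> _ ->. Qed.

Lemma charA_sum (p : nat) (T : Type) (x : 'F_p -> algC) (s : seq T) (g : T -> 'F_p) :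
  is_charA x -> x (\sum_(t <- s) g t) = \prod_(t <- s) x (g t).
Proof.
move=> hx; elim: s => [|t s IH]; first by rewrite !big_nil charA0.
by rewrite !big_cons charAD // IH.
Qed.

Lemma char_family_uniq (p D : nat) (chi : lattice D -> 'F_p -> algC) S :
  char_family chi S -> uniq S.
Proof. by case. Qed.

Lemma char_family_charA (p D : nat) (chi : lattice D -> 'F_p -> algC) S :
  char_family chi S -> forall n, is_charA (chi n).
Proof. by case. Qed.

Section ConfigurationCharacters.

Variables p D : nat.
Local Notation config := (config p D).

Definition cadd (a b : config) : config := fun n => a n + b n.
Definition czero : config := fun _ => 0.
Definition impulse (m : lattice D) (x : 'F_p) : config := fun n => if n == m then x else 0.

Definition is_config_char (psi : config -> algC) : Prop :=
  psi czero = 1 /\ forall a b, psi (cadd a b) = psi a * psi b.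

Lemma char_eval_config_char (chi : lattice D -> 'F_p -> algC) S :
  (forall n, is_charA (chi n)) -> is_config_char (char_eval chi S).
Proof.
move=> hc; split; first by rewrite /char_eval big1_seq // => n _; rewrite charA0.
by move=> a b; rewrite /char_eval -big_split; apply: eq_bigr => n _; rewrite /cadd charAD.
Qed.

Lemma impulseD m (x y : 'F_p) : impulse m (x + y) = cadd (impulse m x) (impulse m y).
Proof.
by apply: functional_extensionality => n; rewrite /impulse /cadd; case: (n == m); rewrite ?addr0.
Qed.

Lemma impulse0 m : impulse m 0 = czero.
Proof. by apply: functional_extensionality => n; rewrite /impulse; case: (n == m). Qed.

Lemma config_char_sum (psi : config -> algC) (T : Type) (s : seq T) (g : T -> config) :
  is_config_char psi -> psi (fun n => \sum_(t <- s) g t n) = \prod_(t <- s) psi (g t).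
Proof.
case=> h0 hD; elim: s => [|t s IH].
  by rewrite big_nil -h0; congr psi; apply: functional_extensionality => n; rewrite big_nil.
rewrite big_cons -IH -hD; congr psi.
by apply: functional_extensionality => n; rewrite big_cons.
Qed.

Lemma config_char_impulse_nat (psi : config -> algC) m k :
  is_config_char psi -> psi (impulse m k%:R) = psi (impulse m 1) ^+ k.
Proof.
case=> h0 hD; elim: k => [|k IH]; first by rewrite impulse0 h0 expr0.
by rewrite mulrS impulseD hD IH exprS.
Qed.

Lemma config_char_impulse (psi : config -> algC) m (x : 'F_p) :
  is_config_char psi -> psi (impulse m x) = psi (impulse m 1) ^+ (nat_of_ord x).
Proof. by move=> h; rewrite -config_char_impulse_nat // natr_Zp. Qed.

Lemma config_char_impulse_expp (psi : config -> algC) m :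
  prime p -> is_config_char psi -> psi (impulse m 1) ^+ p = 1.
Proof.
by move=> pp h; rewrite -config_char_impulse_nat // pchar_Fp_0 // impulse0; case: h.
Qed.

Lemma char_eval_impulse (chi : lattice D -> 'F_p -> algC) S m x :
  uniq S -> (forall n, is_charA (chi n)) ->
  char_eval chi S (impulse m x) = if m \in S then chi m x else 1.
Proof.
move=> uS hc; rewrite /char_eval; case: ifP => mS.
  rewrite (bigD1_seq m) //= /impulse eqxx big1 ?mulr1 // => n nm.
  by rewrite (negbTE nm) charA0.
rewrite big1_seq // => n /andP[_ nS]; rewrite /impulse.
have -> : (n == m) = false by apply: contraFF mS => /eqP <-.
exact: charA0.
Qed.

Section LinearAutomaton.

Variables (U : seq (lattice D)) (f : lattice D -> 'F_p).
Local Notation F := (lca U f).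

Lemma lca_cadd a b : F (cadd a b) = cadd (F a) (F b).
Proof.
apply: functional_extensionality => n; rewrite /lca /cadd /shift -big_split /=.
by apply: eq_bigr => u _; rewrite mulrDr.
Qed.

Lemma lca_czero : F czero = czero.
Proof.
by apply: functional_extensionality => n; rewrite /lca big1_seq // => u _; rewrite mulr0.
Qed.

Lemma config_char_iter (psi : config -> algC) j :
  is_config_char psi -> is_config_char (fun a => psi (iter j F a)).
Proof.
have iter0 : iter j F czero = czero by elim: (j) => //= k ->; rewrite lca_czero.
have iterD a b : iter j F (cadd a b) = cadd (iter j F a) (iter j F b).
  by elim: (j) => //= k ->; rewrite lca_cadd.
by case=> h0 hD; split; [rewrite iter0 | move=> a b; rewrite iterD hD].
Qed.

Lemma lca_impulse m : F (impulse m 1) = fun n => \sum_(u <- U) impulse (m - u) (f u) n.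
Proof.
apply: functional_extensionality => n; rewrite /lca /shift; apply: eq_bigr => u _.
rewrite /impulse (_ : (u + n == m) = (n == m - u)); last first.
  by rewrite [RHS]eq_sym subr_eq addrC eq_sym.
by case: (n == m - u); rewrite ?mulr1 ?mulr0.
Qed.

Lemma config_char_lca_impulse (psi : config -> algC) m : is_config_char psi ->
  psi (F (impulse m 1)) = \prod_(u <- U) psi (impulse (m - u) 1) ^+ (nat_of_ord (f u)).
Proof.
move=> h; rewrite lca_impulse config_char_sum //; apply: eq_bigr => u _.
exact: config_char_impulse.
Qed.

End LinearAutomaton.

End ConfigurationCharacters.

Lemma has_rank_ge (p D : nat) (psi : config p D -> algC) r (L : seq (lattice D)) :
  has_rank psi r -> uniq L -> {in L, forall m, psi (impulse m 1) != 1} -> (size L <= r)%N.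
Proof.
move=> [chi [S [[uS hc _] hpsi <-]]] uL hL; rewrite /fam_rank -size_filter.
apply: uniq_leq_size => // m mL; have := hL m mL.
rewrite hpsi char_eval_impulse //; case: ifP => mS; last by rewrite eqxx.
move=> h1; rewrite mem_filter mS andbT; apply/negP => /forallP /(_ 1) /eqP.
by move/eqP: h1.
Qed.

(* The character [chi \o lca U f] is again a product of one-site characters, the site
   [u + n] receiving the contributions [b |-> chi n (f u * b)]. *)
Lemma char_family_lca (p D : nat) (U : seq (lattice D)) (f : lattice D -> 'F_p)
    (chi0 : lattice D -> 'F_p -> algC) (S0 : seq (lattice D)) :
  char_family chi0 S0 -> exists chi' S', char_family chi' S' /\
    forall a, char_eval chi0 S0 (lca U f a) = char_eval chi' S' a.
Proof.
case=> uS hc htriv.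
pose S' := undup [seq u + n | n <- S0, u <- U].
pose chi' (m : lattice D) (b : 'F_p) :=
  \prod_(n <- S0) \prod_(u <- U) (if u + n == m then chi0 n (f u * b) else 1).
have inS' n u : n \in S0 -> u \in U -> u + n \in S'.
  by move=> nS uU; rewrite mem_undup; apply/allpairsP; exists (n, u).
exists chi', S'; split.
  split; first exact: undup_uniq.
    move=> m; split.
      rewrite /chi' big1_seq // => n _; rewrite big1_seq // => u _.
      by case: ifP => //; rewrite mulr0 charA0.
    move=> a b; rewrite /chi' -big_split; apply: eq_bigr => n _.
    rewrite -big_split; apply: eq_bigr => u _; case: ifP => _ /=; last by rewrite mulr1.
    by rewrite mulrDr charAD.
  move=> m mS; apply/forallP => b; apply/eqP; rewrite /chi' big1_seq // => n /andP[_ nS].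
  rewrite big1_seq // => u /andP[_ uU]; case: ifP => // /eqP e.
  by move: mS; rewrite -e inS'.
move=> a; rewrite /char_eval /lca /shift /chi' exchange_big /=; apply: eq_big_seq => n nS.
rewrite charA_sum // exchange_big /=; apply: eq_big_seq => u uU.
rewrite (bigD1_seq (u + n)) ?undup_uniq ?inS' //= eqxx big1 ?mulr1 // => m.
by rewrite eq_sym => /negbTE ->.
Qed.

Section DiscreteLog.

Variables (p : nat) (z : algC).
Hypotheses (p_pr : prime p) (z_prim : p.-primitive_root z).

Definition rootpow (x : 'F_p) : algC := z ^+ (nat_of_ord x).

(* Junk value [0] when [w] is not a power of [z]. *)
Definition dlog (w : algC) : 'F_p := odflt 0 [pick x : 'F_p | rootpow x == w].

Lemma Fp_val_lt (x : 'F_p) : (nat_of_ord x < p)%N.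
Proof. by apply: leq_trans (ltn_ord x) _; rewrite Fp_cast. Qed.

Lemma rootpow_dlog w : w ^+ p = 1 -> rootpow (dlog w) = w.
Proof.
move=> hw; rewrite /dlog; case: pickP => [x /eqP //|none].
have [i ei] := prim_rootP z_prim hw.
have ip : (i < (Zp_trunc (pdiv p)).+2)%N by rewrite Fp_cast.
by have := none (Ordinal ip); rewrite /rootpow /= ei eqxx.
Qed.

Lemma rootpow_inj : injective rootpow.
Proof.
move=> x y /eqP; rewrite /rootpow (eq_prim_root_expr z_prim) !modn_small ?Fp_val_lt //.
by move=> /eqP; apply: val_inj.
Qed.

Lemma rootpow0 : rootpow 0 = 1.
Proof. by rewrite /rootpow expr0. Qed.

Lemma rootpowD x y : rootpow (x + y) = rootpow x * rootpow y.
Proof.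
rewrite /rootpow -exprD -(prim_expr_mod z_prim (nat_of_ord x + nat_of_ord y)).
by rewrite -{1}(natr_Zp x) -{1}(natr_Zp y) -natrD val_Fp_nat.
Qed.

Lemma rootpowM x y : rootpow (x * y) = rootpow x ^+ (nat_of_ord y).
Proof.
rewrite /rootpow -exprM -(prim_expr_mod z_prim (nat_of_ord x * nat_of_ord y)).
by rewrite -{1}(natr_Zp x) -{1}(natr_Zp y) -natrM val_Fp_nat.
Qed.

Lemma rootpow_sum (T : Type) (s : seq T) (g : T -> 'F_p) :
  rootpow (\sum_(t <- s) g t) = \prod_(t <- s) rootpow (g t).
Proof.
elim: s => [|t s IH]; first by rewrite !big_nil rootpow0.
by rewrite !big_cons rootpowD IH.
Qed.

End DiscreteLog.

Section IteratedCharacter.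

Variables (p D : nat) (U : seq (lattice D)) (f : lattice D -> 'F_p).
Variables (chi : lattice D -> 'F_p -> algC) (S : seq (lattice D)).
Hypothesis chi_family : char_family chi S.

Definition iter_char (j : nat) (a : config p D) : algC :=
  char_eval chi S (iter j (lca U f) a).

Lemma iter_char_has_rank j : exists r, has_rank (iter_char j) r.
Proof.
suff [chi' [S' [fam' rep']]] : exists chi' S', char_family chi' S' /\
    forall a, iter_char j a = char_eval chi' S' a.
  by exists (fam_rank chi' S'), chi', S'.
elim: j => [|j [chi1 [S1 [fam1 rep1]]]]; first by exists chi, S.
have [chi2 [S2 [fam2 rep2]]] := char_family_lca U f fam1.
by exists chi2, S2; split => // a; rewrite /iter_char iterSr -rep2 -rep1.
Qed.

Variable z : algC.
Hypotheses (p_pr : prime p) (z_prim : p.-primitive_root z).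

Let chi_char := char_family_charA chi_family.
Let S_uniq := char_family_uniq chi_family.

(* [iter_char j] is the character [(x)_m (b |-> z ^ (dual_coef j m * b))]. *)
Definition dual_coef (j : nat) (m : lattice D) : 'F_p :=
  dlog p z (iter_char j (impulse m 1)).

Lemma iter_char_config_char j : is_config_char (iter_char j).
Proof. exact/config_char_iter/char_eval_config_char. Qed.

Lemma rootpow_dual_coef j m : rootpow z (dual_coef j m) = iter_char j (impulse m 1).
Proof. exact/rootpow_dlog/config_char_impulse_expp/iter_char_config_char. Qed.

Lemma dual_coefS j m : dual_coef j.+1 m = \sum_(u <- U) f u * dual_coef j (m - u).
Proof.
apply: (rootpow_inj p_pr z_prim); rewrite rootpow_dual_coef rootpow_sum //.
have -> : iter_char j.+1 (impulse m 1) = iter_char j (lca U f (impulse m 1)).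
  by rewrite /iter_char iterSr.
rewrite config_char_lca_impulse; last exact: iter_char_config_char.
by apply: eq_bigr => u _; rewrite mulrC rootpowM // rootpow_dual_coef.
Qed.

Lemma dual_coef_neq0 j m : (dual_coef j m != 0) = (iter_char j (impulse m 1) != 1).
Proof.
rewrite -rootpow_dual_coef -(rootpow0 p z); congr negb; apply/eqP/eqP => [-> //|].
exact: (rootpow_inj p_pr z_prim).
Qed.

Lemma dual_coef0_supp m : dual_coef 0 m != 0 -> m \in S.
Proof.
by rewrite dual_coef_neq0 /iter_char /= char_eval_impulse //; case: ifP; rewrite ?eqxx.
Qed.

Lemma dual_coef0_witness : (0 < fam_rank chi S)%N -> exists2 n, n \in S & dual_coef 0 n != 0.
Proof.
rewrite /fam_rank -has_count => /hasP[n nS /forallPn[a ha]].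
exists n => //; rewrite dual_coef_neq0; apply: contra ha => /eqP h1.
have := config_char_impulse n a (iter_char_config_char 0).
by rewrite h1 expr1n /iter_char /= char_eval_impulse // nS => ->.
Qed.

End IteratedCharacter.

(** * Projection to one dimension *)

Definition lin_form (D : nat) (w : 'I_D -> int) (m : lattice D) : int :=
  \sum_(i < D) m 0 i * w i.

Lemma lin_formD (D : nat) (w : 'I_D -> int) (m u : lattice D) :
  lin_form w (m + u) = lin_form w m + lin_form w u.
Proof. by rewrite /lin_form -big_split; apply: eq_bigr => i _; rewrite mxE mulrDl. Qed.

Lemma base_expansion_eq0 (n : nat) (K : int) (v : 'I_n -> int) : 0 < K ->
  (forall i, `|v i| < K) -> \sum_(i < n) v i * K ^+ i = 0 -> forall i, v i = 0.
Proof.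
move=> K0; elim: n v => [|n IH] v hv hs i; first by case: i.
set T := \sum_(i < n) v (lift ord0 i) * K ^+ i.
have eT : v ord0 + K * T = 0.
  rewrite -hs big_ord_recl expr0 mulr1 /T mulr_sumr; congr (_ + _).
  by apply: eq_bigr => j _; rewrite exprS mulrCA.
have T0 : T = 0.
  have := hv ord0; rewrite (_ : v ord0 = - (K * T)); last by rewrite -[LHS]subr0 -eT; ring.
  rewrite normrN normrM gtr0_norm // => lt.
  by apply/normr0_eq0; nia.
case: (unliftP ord0 i) => [j ->|->]; last by move: eT; rewrite T0 mulr0 addr0.
exact: (IH (fun j => v (lift ord0 j))).
Qed.

(* Weights [K ^ i] with [K] exceeding every coordinate difference: the coordinates of
   [x - y] are then the base-[K] digits of [lin_form w (x - y)]. *)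
Lemma lin_form_injective_on (D : nat) (X : seq (lattice D)) :
  exists w : 'I_D -> int, {in X &, injective (lin_form w)}.
Proof.
pose B := \sum_(x <- X) \sum_(i < D) `|x 0 i|; pose K := 2 * B + 1.
have B0 : 0 <= B by apply: sumr_ge0 => x _; apply: sumr_ge0.
have coordB x i : x \in X -> `|x 0 i| <= B.
  move=> xX; rewrite /B (big_rem x xX) (bigD1 i) //= -addrA lerDl.
  by apply: addr_ge0; apply: sumr_ge0 => // y _; apply: sumr_ge0.
have K0 : 0 < K by rewrite /K; lia.
exists (fun i => K ^+ i) => x y xX yX e.
apply/rowP => i; apply/eqP; rewrite -subr_eq0; apply/eqP; move: i.
apply: (base_expansion_eq0 K0) => [i|].
  apply: le_lt_trans (ler_normB _ _) _.
  apply: le_lt_trans (lerD (coordB x i xX) (coordB y i yX)) _.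
  by rewrite /K; lia.
under eq_bigr do rewrite mulrBl.
by rewrite sumrB -/(lin_form _ x) -/(lin_form _ y) e subrr.
Qed.

Lemma seq_argmin (T : eqType) (s : seq T) (g : T -> int) x0 : x0 \in s ->
  exists2 x, x \in s & forall y, y \in s -> g x <= g y.
Proof.
elim: s x0 => // a s IH x0 _; case: s IH => [|b s] IH.
  by exists a; rewrite ?mem_head // => y; rewrite inE => /eqP ->.
have [x xs hx] := IH b (mem_head _ _); case: (lerP (g a) (g x)) => h.
  exists a; first exact: mem_head.
  by move=> y; rewrite inE => /orP[/eqP -> //|ys]; exact: le_trans h (hx y ys).
exists x; first by rewrite inE xs orbT.
by move=> y; rewrite inE => /orP[/eqP ->|ys]; [exact: ltW | exact: hx].
Qed.

Lemma big_uniq_supp_eq (T : eqType) (V : nmodType) (s1 s2 : seq T) (h : T -> V) :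
  uniq s1 -> uniq s2 -> (forall x, h x != 0 -> (x \in s1) && (x \in s2)) ->
  \sum_(x <- s1) h x = \sum_(x <- s2) h x.
Proof.
move=> u1 u2 H.
have nz s : \sum_(x <- s) h x = \sum_(x <- [seq x <- s | h x != 0]) h x.
  by rewrite big_filter [RHS]big_mkcond; apply: eq_bigr => x _; case: (h x =P 0).
rewrite (nz s1) (nz s2); apply/perm_big/uniq_perm; rewrite ?filter_uniq // => x.
by rewrite !mem_filter; case hx: (h x != 0) => //=; have /andP[-> ->] := H x hx.
Qed.

Fixpoint sumset_iter (D : nat) (S U : seq (lattice D)) (j : nat) : seq (lattice D) :=
  if j is j'.+1 then undup [seq m + u | m <- sumset_iter S U j', u <- U] else S.

Section SumsetIter.

Variables (D : nat) (S U : seq (lattice D)).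
Local Notation T := (sumset_iter S U).

Lemma sumset_iter_uniq j : uniq S -> uniq (T j).
Proof. by case: j => //= j _; exact: undup_uniq. Qed.

Lemma sumset_iterS m u j : m \in T j -> u \in U -> m + u \in T j.+1.
Proof. by move=> mT uU /=; rewrite mem_undup; apply/allpairsP; exists (m, u). Qed.

Lemma sumset_iterSP m' j : m' \in T j.+1 -> exists2 m, m \in T j & exists2 u, u \in U & m' = m + u.
Proof. by rewrite /= mem_undup => /allpairsP[[m u] [/= mT uU ->]]; exists m => //; exists u. Qed.

End SumsetIter.

Section ProjectionPolynomial.

Variables (F : idomainType) (D : nat) (w : 'I_D -> int).
Local Notation lam := (lin_form w).

Definition proj_poly (X : seq (lattice D)) (g : lattice D -> F) (A : int) : {poly F} :=
  \sum_(x <- X) g x *: 'X^(absz (lam x - A)).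

Lemma nzcoefs_proj_poly_le X g A : (nzcoefs (proj_poly X g A) <= count (fun x => g x != 0%R) X)%N.
Proof.
rewrite -size_filter -(size_map (fun x => absz (lam x - A))) /nzcoefs.
apply: uniq_leq_size; first exact: coef_support_uniq.
move=> e; rewrite mem_coef_support /proj_poly coef_sum; apply: contraR => /mapP none.
rewrite big1_seq // => x /= xX; rewrite coefZ coefXn.
case: eqP => [ex|]; last by rewrite mulr0.
case: (g x =P 0) => [->|/eqP gx]; first by rewrite mul0r.
by case: none; exists x; rewrite // mem_filter gx.
Qed.

Lemma coef_proj_poly_at X g A x0 : uniq X -> {in X &, injective lam} ->
  {in X, forall x, A <= lam x} -> x0 \in X -> (proj_poly X g A)`_(absz (lam x0 - A)) = g x0.
Proof.
move=> uX inj hA x0X; rewrite /proj_poly coef_sum (bigD1_seq x0) //= coefZ coefXn eqxx mulr1.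
rewrite big1_seq ?addr0 // => x /andP[xx0 xX]; rewrite coefZ coefXn.
case: eqP => [e|]; last by rewrite mulr0.
have := congr1 Posz e; rewrite !gez0_abs ?subr_ge0 ?hA //.
by move/addIr/(inj _ _ x0X xX) => ex; rewrite ex eqxx in xx0.
Qed.

Lemma proj_polyM X Y g h A B : {in X, forall x, A <= lam x} -> {in Y, forall y, B <= lam y} ->
  proj_poly X g A * proj_poly Y h B =
  \sum_(x <- X) \sum_(y <- Y) (g x * h y) *: 'X^(absz (lam (x + y) - (A + B))%R).
Proof.
move=> hA hB; rewrite /proj_poly big_distrl; apply: eq_big_seq => x xX /=.
rewrite big_distrr; apply: eq_big_seq => y yY /=.
rewrite -scalerAl -scalerAr scalerA -exprD mulrC; congr (_ *: 'X^_).
apply/eqP; rewrite -eqz_nat PoszD lin_formD !gez0_abs ?subr_ge0 ?hA ?hB //.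
  by apply/eqP; ring.
by rewrite lerD ?hA ?hB.
Qed.

Section Nondegenerate.

Variables (X : seq (lattice D)) (g : lattice D -> F) (A : int).
Hypotheses (X_uniq : uniq X) (lam_inj : {in X &, injective lam}).
Hypothesis X_geA : {in X, forall x, A <= lam x}.

Lemma proj_poly_neq0 x0 : x0 \in X -> g x0 != 0 -> proj_poly X g A != 0.
Proof.
move=> x0X gx0; apply: contraNneq gx0 => P0.
by rewrite -(coef_proj_poly_at _ X_uniq lam_inj X_geA x0X) P0 coef0.
Qed.

Lemma proj_poly_size_gt1 x0 x1 : x0 \in X -> x1 \in X -> A = lam x0 -> x1 != x0 ->
  g x1 != 0 -> (1 < size (proj_poly X g A))%N.
Proof.
move=> x0X x1X eA x10 gx1.
have pos : (0 < absz (lam x1 - A))%N.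
  by rewrite eA absz_gt0 subr_eq0; apply: contra x10 => /eqP/(lam_inj x1X x0X) ->.
apply: leq_ltn_trans pos _; apply: coef_support_lt.
by rewrite mem_coef_support coef_proj_poly_at.
Qed.

End Nondegenerate.

End ProjectionPolynomial.

Section DualProjection.

Variables (F : idomainType) (D : nat) (w : 'I_D -> int).
Variables (S U : seq (lattice D)) (f : lattice D -> F) (c : nat -> lattice D -> F).
Variables A B : int.
Hypotheses (S_uniq : uniq S) (U_geA : {in U, forall u, A <= lin_form w u}).
Hypothesis S_geB : {in S, forall n, B <= lin_form w n}.
Hypothesis c0_supp : forall m, c 0%N m != 0 -> m \in S.
Hypothesis c_rec : forall j m, c j.+1 m = \sum_(u <- U) f u * c j (m - u).

Local Notation T := (sumset_iter S U).
Local Notation offset j := (B + (j%:Z) * A).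

Let offsetS j : offset j.+1 = offset j + A.
Proof. by rewrite -addn1 PoszD mulrDl mul1r addrA. Qed.

Lemma dual_supp_sumset j m : c j m != 0 -> m \in T j.
Proof.
elim: j m => [|j IH] m; first exact: c0_supp.
rewrite c_rec; have [/hasP[u uU]|/hasPn none] := boolP (has (fun u => c j (m - u) != 0) U).
  by move=> /IH cu _; rewrite -(subrK u m) sumset_iterS.
by rewrite big1_seq ?eqxx // => u /andP[_ /none]; rewrite negbK => /eqP ->; rewrite mulr0.
Qed.

Lemma lin_form_sumset_ge j m : m \in T j -> offset j <= lin_form w m.
Proof.
elim: j m => [|j IH] m; first by rewrite mul0r addr0; apply: S_geB.
rewrite offsetS => /sumset_iterSP[m0 m0T [u uU ->]]; rewrite lin_formD.
by apply: lerD; [apply: IH | apply: U_geA].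
Qed.

Lemma proj_poly_dualS j : proj_poly w (T j.+1) (c j.+1) (offset j.+1) =
  proj_poly w (T j) (c j) (offset j) * proj_poly w U f A.
Proof.
rewrite proj_polyM; [|exact: lin_form_sumset_ge|exact: U_geA].
rewrite offsetS /proj_poly; under eq_bigr do rewrite c_rec scaler_suml.
rewrite exchange_big [RHS]exchange_big /=; apply: eq_big_seq => u uU.
rewrite (big_uniq_supp_eq _ (s2 := [seq m + u | m <- T j])).
- by rewrite big_map; apply: eq_bigr => m _; rewrite addrK mulrC.
- exact: undup_uniq.
- by rewrite map_inj_uniq ?sumset_iter_uniq //; exact: addIr.
move=> x; have [->|cx _] := eqVneq (c j (x - u)) 0; first by rewrite mulr0 scale0r eqxx.
have xT := dual_supp_sumset cx.
by rewrite -{1}(subrK u x) sumset_iterS //=; apply/mapP; exists (x - u); rewrite ?subrK.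
Qed.

Lemma proj_poly_dual j :
  proj_poly w (T j) (c j) (offset j) = proj_poly w S (c 0%N) B * proj_poly w U f A ^+ j.
Proof.
elim: j => [|j IH]; first by rewrite mul0r addr0 expr0 mulr1.
by rewrite proj_poly_dualS IH exprSr mulrA.
Qed.

Lemma nzcoefs_dual_le j : (nzcoefs (proj_poly w S (c 0%N) B * proj_poly w U f A ^+ j)
  <= count (fun m => c j m != 0%R) (T j))%N.
Proof. by rewrite -proj_poly_dual nzcoefs_proj_poly_le. Qed.

End DualProjection.

Lemma sum_mul_filter_nz (R : pzSemiRingType) (T : Type) (s : seq T) (f h : T -> R) :
  \sum_(u <- s) f u * h u = \sum_(u <- [seq u <- s | f u != 0]) f u * h u.
Proof.
by rewrite big_filter [RHS]big_mkcond; apply: eq_bigr => u _; case: eqP => // ->; rewrite mul0r.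
Qed.

Lemma dual_support_growth (p D : nat) (S U : seq (lattice D)) (f : lattice D -> 'F_p)
    (c : nat -> lattice D -> 'F_p) :
  prime p -> uniq S -> uniq U -> nontrivial_lca U f ->
  (forall m, c 0%N m != 0 -> m \in S) -> (exists2 n, n \in S & c 0%N n != 0) ->
  (forall j m, c j.+1 m = \sum_(u <- U) f u * c j (m - u)) ->
  exists (Q : nat) (good : pred nat) (i0 : nat),
    [/\ (1 < Q)%N, ~~ good 0%N, exists2 x, (x < Q)%N & good x &
      forall j n, exists2 L : seq (lattice D), uniq L /\ {in L, forall m, c j m != 0} &
        (2 ^ (good_digits Q good j n - i0) <= size L)%N].
Proof.
move=> p_pr uS uU [u1 [v1 [u1U v1U uv f1 f2]]] c0_supp [n0 n0S cn0] c_rec.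
pose U' := [seq u <- U | f u != 0]; have uU' : uniq U' by rewrite filter_uniq.
have c_rec' j m : c j.+1 m = \sum_(u <- U') f u * c j (m - u) by rewrite c_rec sum_mul_filter_nz.
have [u1U' v1U'] : u1 \in U' /\ v1 \in U' by rewrite !mem_filter f1 f2.
have [w w_inj] := lin_form_injective_on (S ++ U').
have injS : {in S &, injective (lin_form w)} by move=> x y xS yS; apply: w_inj; rewrite mem_cat ?xS ?yS.
have injU : {in U' &, injective (lin_form w)}.
  by move=> x y xU yU; apply: w_inj; rewrite mem_cat ?xU ?yU orbT.
have [us usU minU] := @seq_argmin _ U' (lin_form w) _ u1U'.
have [ns nsS minS] := @seq_argmin _ S (lin_form w) _ n0S.
set A := lin_form w us; set B := lin_form w ns.
pose C := proj_poly w S (c 0%N) B; pose P := proj_poly w U' f A.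
have C0 : C != 0 := proj_poly_neq0 uS injS minS n0S cn0.
have P0 : P`_0 != 0.
  have := coef_proj_poly_at f uU' injU minU usU; rewrite subrr /= -/P => ->.
  by move: usU; rewrite mem_filter => /andP[].
have sP : (1 < size P)%N.
  pose v := if u1 == us then v1 else u1.
  have vU : v \in U' by rewrite /v; case: ifP.
  have vus : v != us by rewrite /v; case: ifP => [/eqP <-|/negbT //]; rewrite eq_sym.
  by apply: (proj_poly_size_gt1 uU' injU minU usU vU) => //; move: vU; rewrite mem_filter => /andP[].
exists (growth_base P), (growth_digit P), (size C); split.
- by rewrite -(expn0 p) ltn_exp2l ?prime_gt1.
- by rewrite /growth_digit eqxx andbF.
- exists (p ^ size P)%N; first by rewrite ltn_exp2l ?prime_gt1.
  by rewrite /growth_digit dvdnn -lt0n expn_gt0 prime_gt0.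
move=> j n; exists [seq m <- sumset_iter S U' j | c j m != 0].
  by split; [rewrite filter_uniq // sumset_iter_uniq | move=> m; rewrite mem_filter => /andP[]].
apply: leq_trans (nzcoefs_growth p_pr C0 P0 sP j n) _; rewrite size_filter.
exact: (nzcoefs_dual_le uS minU minS c0_supp c_rec').
Qed.

Theorem theorem5p1 (p D : nat) (U : seq (lattice D)) (f : lattice D -> 'F_p) :
  prime p -> (1 <= D)%N -> uniq U -> nontrivial_lca U f ->
  diffusive_in_density (lca U f).
Proof.
move=> p_pr _ uU nontriv chi S fam rank_pos.
have [z z_prim] := C_prim_root_exists (prime_gt0 p_pr).
have [Q [good [i0 [Q_gt1 good0 some_good growth]]]] :=
  dual_support_growth p_pr (char_family_uniq fam) uU nontriv
    (dual_coef0_supp (U := U) (f := f) fam p_pr z_prim)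
    (dual_coef0_witness U f fam p_pr z_prim rank_pos) (dual_coefS U f fam p_pr z_prim).
exists (many_good Q good); split; first exact: density_one_many_good.
move=> M; have [N0 hN0] := many_good_unbounded Q_gt1 some_good (M + i0).
exists N0 => j Jj jN0 psi; split; first exact: iter_char_has_rank.
move=> r rank_r; have [L [uL nzL] sizeL] := growth j (ndigits Q j).
apply: leq_trans (has_rank_ge rank_r uL _); last first.
  by move=> m /nzL; rewrite dual_coef_neq0.
have many := hN0 j Jj jN0.
apply: leq_trans sizeL; apply: leq_trans (ltnW (ltn_expl M (ltnSn 1))) _.
by rewrite leq_exp2l //; lia.
Qed.
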